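(* Let $d\ge 2$, $x\in\mathbb{R}^d$, $i\in\{1,\dots,d\}$, and for $y\in\mathbb{R}^d$ write $y_{-i} := (y_1,\dots,y_{i-1},y_{i+1},\dots,y_d)^\top\in\mathbb{R}^{d-1}$. Then: 1. If $z = \Pi_{\mathcal{P}_{d,\text{even}}}(x)$ and $z_i=1$, then $z_{-i} = \Pi_{\mathcal{P}_{d-1,\text{odd}}}(x_{-i})$. 2. If $z = \Pi_{\mathcal{P}_{d,\text{even}}}(x)$ and $z_i=0$, then $z_{-i} = \Pi_{\mathcal{P}_{d-1,\text{even}}}(x_{-i})$. 3. If $z = \Pi_{\mathcal{P}_{d,\text{odd}}}(x)$ and $z_i=1$, then $z_{-i} = \Pi_{\mathcal{P}_{d-1,\text{even}}}(x_{-i})$. 4. If $z = \Pi_{\mathcal{P}_{d,\text{odd}}}(x)$ and $z_i=0$, then $z_{-i} = \Pi_{\mathcal{P}_{d-1,\text{odd}}}(x_{-i})$.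
   Context: $\mathcal{P}_{k,\text{even}} := \operatorname{conv}\{x\in\{0,1\}^k : \sum_i x_i \text{ even}\}$, $\mathcal{P}_{k,\text{odd}} := \operatorname{conv}\{x\in\{0,1\}^k : \sum_i x_i \text{ odd}\}$; $\Pi_C$ denotes Euclidean projection onto the closed convex set $C$. *)

From mathcomp Require Import all_boot all_order all_algebra.
From mathcomp Require Import reals.
Set Implicit Arguments. Unset Strict Implicit. Unset Printing Implicit Defensive.
Import Order.TTheory GRing.Theory Num.Theory.
Local Open Scope ring_scope.

Definition weight (k : nat) (b : {ffun 'I_k -> bool}) : nat :=
  (\sum_(j < k) nat_of_bool (b j))%N.

Definition bvec (R : realType) (k : nat) (b : {ffun 'I_k -> bool}) : 'I_k -> R :=
  fun j => (nat_of_bool (b j))%:R.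

Definition parity_polytope (R : realType) (k : nat) (par : bool) : ('I_k -> R) -> Prop :=
  fun y => exists w : {ffun 'I_k -> bool} -> R,
    (forall b, 0 <= w b) /\
    (\sum_(b : {ffun 'I_k -> bool} | odd (weight b) == par) w b = 1) /\
    (forall j, y j = \sum_(b : {ffun 'I_k -> bool} | odd (weight b) == par) w b * @bvec R k b j).

Definition P_even (R : realType) (k : nat) := @parity_polytope R k false.
Definition P_odd (R : realType) (k : nat) := @parity_polytope R k true.

Definition sqdist (R : realType) (k : nat) (x y : 'I_k -> R) : R :=
  \sum_(j < k) (x j - y j) ^+ 2.

Definition is_proj (R : realType) (k : nat) (C : ('I_k -> R) -> Prop) (x z : 'I_k -> R) : Prop :=
  C z /\ forall y, C y -> sqdist x z <= sqdist x y.

Definition drop_coord (R : realType) (d : nat) (i : 'I_d) (y : 'I_d -> R) : 'I_d.-1 -> R :=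
  fun j => y (lift i j).

(* A point z of the parity polytope with z_i = v is a convex combination of
   vertices b that all satisfy b_i = v, because the coordinate i of every
   vertex lies on the same side of v.  Deleting coordinate i therefore maps
   the face {y_i = v} of P_{d,par} onto P_{d-1, par xor v}, and inserting v
   maps it back.  Since the squared distance splits as (x_i - y_i)^2 plus the
   distance of the remaining coordinates, minimality of z over the face is
   minimality of z_{-i} over P_{d-1, par xor v}. *)
From mathcomp Require Import all_boot all_order all_algebra.
From mathcomp Require Import reals.
Import Order.TTheory GRing.Theory Num.Theory.
Local Open Scope ring_scope.

Section InsertCoordinate.
Context {n : nat} (i : 'I_n.+1).

Definition binsert (v : bool) (c : {ffun 'I_n -> bool}) : {ffun 'I_n.+1 -> bool} :=
  [ffun j => if unlift i j is Some k then c k else v].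

Definition bdrop (b : {ffun 'I_n.+1 -> bool}) : {ffun 'I_n -> bool} :=
  [ffun k => b (lift i k)].

Lemma binsert_id v c : binsert v c i = v.
Proof. by rewrite ffunE unlift_none. Qed.

Lemma binsert_lift v c k : binsert v c (lift i k) = c k.
Proof. by rewrite ffunE liftK. Qed.

Lemma binsertK v : cancel (binsert v) bdrop.
Proof. by move=> c; apply/ffunP => k; rewrite ffunE binsert_lift. Qed.

Lemma bdropK v (b : {ffun 'I_n.+1 -> bool}) : b i = v -> binsert v (bdrop b) = b.
Proof.
move=> biv; apply/ffunP => j; rewrite ffunE.
by case: unliftP => [k ->|->]; rewrite ?ffunE.
Qed.

Lemma weight_binsert v c : weight (binsert v c) = (v + weight c)%N.
Proof.
rewrite /weight (bigD1_ord i) //= binsert_id; congr (_ + _)%N.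
by apply: eq_bigr => k _; rewrite binsert_lift.
Qed.

Lemma big_parity_binsert {V : nmodType} (par v : bool)
    (F : {ffun 'I_n.+1 -> bool} -> V) :
  (forall b, odd (weight b) == par -> b i != v -> F b = 0) ->
  \sum_(b | odd (weight b) == par) F b =
  \sum_(c : {ffun 'I_n -> bool} | odd (weight c) == par (+) v) F (binsert v c).
Proof.
move=> F_off.
rewrite (bigID (fun b : {ffun 'I_n.+1 -> bool} => b i == v)) /= [X in _ + X]big1 ?addr0; last first.
  by move=> b /andP[par_b /F_off]; apply.
rewrite (reindex_onto (binsert v) bdrop); last by move=> b /andP[_ /eqP /bdropK].
apply: eq_bigl => c; rewrite binsert_id binsertK !eqxx !andbT weight_binsert oddD.
by clear F_off; case: v; case: par; case: (odd (weight c)).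
Qed.

Context {R : realType}.

Definition vinsert (a : R) (y : 'I_n -> R) : 'I_n.+1 -> R :=
  fun j => if unlift i j is Some k then y k else a.

Lemma vinsert_id a y : vinsert a y i = a.
Proof. by rewrite /vinsert unlift_none. Qed.

Lemma vinsert_lift a y k : vinsert a y (lift i k) = y k.
Proof. by rewrite /vinsert liftK. Qed.

Lemma sqdist_drop_coord (x y : 'I_n.+1 -> R) :
  sqdist x y = (x i - y i) ^+ 2 + sqdist (drop_coord i x) (drop_coord i y).
Proof. by rewrite /sqdist (bigD1_ord i). Qed.

Lemma sqdist_vinsert (x : 'I_n.+1 -> R) a y :
  sqdist x (vinsert a y) = (x i - a) ^+ 2 + sqdist (drop_coord i x) y.
Proof.
rewrite sqdist_drop_coord vinsert_id; congr (_ + _).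
by apply: eq_bigr => k _; rewrite /drop_coord vinsert_lift.
Qed.

Lemma is_proj_drop_coord (C : ('I_n.+1 -> R) -> Prop) (D : ('I_n -> R) -> Prop)
    (a : R) x z :
  (forall y, C y -> y i = a -> D (drop_coord i y)) ->
  (forall y, D y -> C (vinsert a y)) ->
  is_proj C x z -> z i = a -> is_proj D (drop_coord i x) (drop_coord i z).
Proof.
move=> C_D D_C [Cz z_min] zi; split; first exact: C_D.
move=> y Dy; have := z_min _ (D_C _ Dy).
by rewrite sqdist_drop_coord sqdist_vinsert zi lerD2l.
Qed.

Lemma parity_polytope_face_weight (par v : bool) {w : {ffun 'I_n.+1 -> bool} -> R}
    {z : 'I_n.+1 -> R} :
  (forall b, 0 <= w b) ->
  \sum_(b | odd (weight b) == par) w b = 1 ->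
  z i = \sum_(b | odd (weight b) == par) w b * @bvec R _ b i ->
  z i = v%:R ->
  forall b, odd (weight b) == par -> b i != v -> w b = 0.
Proof.
move=> w_ge0 w_sum1 z_comb zi.
(* The weight carried by vertices off the face is |z_i - v|, i.e. zero. *)
have off_face : \sum_(b | odd (weight b) == par) w b * (b i != v)%:R = 0.
  case: v zi => zi.
    have -> : \sum_(b | odd (weight b) == par) w b * (b i != true)%:R =
        \sum_(b | odd (weight b) == par) w b -
        \sum_(b | odd (weight b) == par) w b * @bvec R _ b i.
      by rewrite -sumrB; apply: eq_bigr => b _; rewrite /bvec; case: (b i);
        rewrite ?mulr1 ?mulr0 ?subr0 ?subrr.
    by rewrite w_sum1 -z_comb zi subrr.
  transitivity (z i); last by rewrite zi.
  rewrite z_comb; apply: eq_bigr => b _.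
  by rewrite /bvec; case: (b i).
move=> b par_b bi.
have : w b * (b i != v)%:R = 0.
  by apply: (psumr_eq0P _ off_face par_b) => c _; rewrite mulr_ge0.
by rewrite bi mulr1.
Qed.

Lemma parity_polytope_drop_coord (par v : bool) z :
  @parity_polytope R n.+1 par z -> z i = v%:R ->
  @parity_polytope R n (par (+) v) (drop_coord i z).
Proof.
move=> [w [w_ge0 [w_sum1 z_comb]]] zi.
have w_off := parity_polytope_face_weight par v w_ge0 w_sum1 (z_comb i) zi.
exists (fun c => w (binsert v c)); split; first by move=> c; apply: w_ge0.
split; first by rewrite -w_sum1 (big_parity_binsert par v).
move=> k; rewrite /drop_coord z_comb (big_parity_binsert par v).
  by apply: eq_bigr => c _; rewrite /bvec binsert_lift.
by move=> b par_b bi; rewrite w_off // mul0r.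
Qed.

Lemma parity_polytope_vinsert (par v : bool) y :
  @parity_polytope R n (par (+) v) y -> @parity_polytope R n.+1 par (vinsert v%:R y).
Proof.
move=> [w [w_ge0 [w_sum1 y_comb]]].
pose W (b : {ffun 'I_n.+1 -> bool}) := if b i == v then w (bdrop b) else 0.
have sumW G : \sum_(b | odd (weight b) == par) W b * G b =
    \sum_(c | odd (weight c) == par (+) v) w c * G (binsert v c).
  rewrite (big_parity_binsert par v).
    by apply: eq_bigr => c _; rewrite /W binsert_id eqxx binsertK.
  by move=> b _ bi; rewrite /W (negbTE bi) mul0r.
exists W; split; first by move=> b; rewrite /W; case: ifP.
split.
  have := sumW (fun=> 1); under eq_bigr do rewrite mulr1.
  by move=> ->; under eq_bigr do rewrite mulr1.
move=> j; rewrite sumW; case: (unliftP i j) => [k ->|->].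
  by rewrite vinsert_lift y_comb; apply: eq_bigr => c _; rewrite /bvec binsert_lift.
rewrite vinsert_id; under eq_bigr do rewrite /bvec binsert_id.
by rewrite -mulr_suml w_sum1 mul1r.
Qed.

Lemma is_proj_parity_polytope_drop_coord (par v : bool) {x z} :
  is_proj (@parity_polytope R n.+1 par) x z -> z i = v%:R ->
  is_proj (@parity_polytope R n (par (+) v)) (drop_coord i x) (drop_coord i z).
Proof.
apply: is_proj_drop_coord; first exact: parity_polytope_drop_coord.
exact: parity_polytope_vinsert.
Qed.

End InsertCoordinate.

Theorem theorem5 (R : realType) (d : nat) (hd : (2 <= d)%N) (x : 'I_d -> R) (i : 'I_d) :
  (forall z, is_proj (@P_even R d) x z -> z i = 1 ->
     is_proj (@P_odd R d.-1) (drop_coord i x) (drop_coord i z)) /\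
  (forall z, is_proj (@P_even R d) x z -> z i = 0 ->
     is_proj (@P_even R d.-1) (drop_coord i x) (drop_coord i z)) /\
  (forall z, is_proj (@P_odd R d) x z -> z i = 1 ->
     is_proj (@P_even R d.-1) (drop_coord i x) (drop_coord i z)) /\
  (forall z, is_proj (@P_odd R d) x z -> z i = 0 ->
     is_proj (@P_odd R d.-1) (drop_coord i x) (drop_coord i z)).
Proof.
case: d hd x i => [//|n] _ x i.
split; [|split; [|split]] => z proj_z zi.
- by apply: (is_proj_parity_polytope_drop_coord i false true proj_z); rewrite zi.
- by apply: (is_proj_parity_polytope_drop_coord i false false proj_z); rewrite zi.
- by apply: (is_proj_parity_polytope_drop_coord i true true proj_z); rewrite zi.
- by apply: (is_proj_parity_polytope_drop_coord i true false proj_z); rewrite zi.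
Qed.
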